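(* Let $\mathscr X\in\mathbb R^{I_1\times\cdots\times I_N}$ be a nonzero tensor, and set $R_n=\operatorname{rank}(\mathbf X_{(n)})$ for $1\leq n\leq N$. Then $\mathscr X$ has a subtensor $\mathscr Y\in\mathbb R^{R_1\times\cdots\times R_N}$ with $\operatorname{rank}(\mathbf Y_{(n)})=R_n$ for all $1\leq n\leq N$.
   Context: All tensors are real. For $\mathscr X\in\mathbb R^{I_1\times\cdots\times I_N}$, the mode-$n$ unfolding $\mathbf X_{(n)}$ is the $I_n\times\prod_{k\neq n}I_k$ matrix whose rows are indexed by $i_n$ and whose columns are exactly the vectors obtained from $\mathscr X$ by fixing all indices other than $i_n$. A subtensor of $\mathscr X$ is a tensor $\mathscr Y\in\mathbb R^{J_1\times\cdots\times J_N}$ with $1\le J_n\le I_n$ of the form $y_{j_1\cdots j_N}=x_{i_{1j_1}\cdots i_{Nj_N}}$ for some indices $1\leq i_{n1}<\cdots<i_{nJ_n}\leq I_n$, $1\le n\le N$. *)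

From HB Require Import structures.
From mathcomp Require Import all_boot all_order all_algebra.
From mathcomp Require Import reals.
Set Implicit Arguments. Unset Strict Implicit. Unset Printing Implicit Defensive.
Import Order.TTheory GRing.Theory Num.Theory.
Local Open Scope ring_scope.

Definition mindex (N : nat) (I : 'I_N -> nat) := {dffun forall k : 'I_N, 'I_(I k)}.

Definition tensor (R : Type) (N : nat) (I : 'I_N -> nat) := mindex I -> R.

(* Column index of the mode-n unfolding: a choice of all indices other than i_n. *)
Definition cindex (N : nat) (I : 'I_N -> nat) (n : 'I_N) :=
  {dffun forall k : {k : 'I_N | k != n}, 'I_(I (sval k))}.

Definition merge_val (N : nat) (I : 'I_N -> nat) (n : 'I_N)
    (i : 'I_(I n)) (c : cindex I n) (k : 'I_N) : 'I_(I k) :=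
  match @idP (k != n) with
  | ReflectT h => c (exist _ k h)
  | ReflectF h => cast_ord (congr1 I (esym (eqP (negbNE (introN idP h))))) i
  end.

Definition merge (N : nat) (I : 'I_N -> nat) (n : 'I_N)
    (i : 'I_(I n)) (c : cindex I n) : mindex I :=
  [ffun k => merge_val i c k].

(* Mode-n unfolding: rows indexed by i_n, columns are the mode-n fibres
   (enumerated in the fixed order enum (cindex I n)). *)
Definition unfolding (R : Type) (N : nat) (I : 'I_N -> nat)
    (X : tensor R I) (n : 'I_N) : 'M[R]_(I n, #|{: cindex I n}|) :=
  \matrix_(i, j) X (merge i (enum_val j)).

Definition subtensor (R : Type) (N : nat) (I J : 'I_N -> nat) (X : tensor R I)
    (f : forall k : 'I_N, 'I_(J k) -> 'I_(I k)) : tensor R J :=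
  fun j => X [ffun k => f k (j k)].

Definition strictly_increasing (m p : nat) (g : 'I_m -> 'I_p) : Prop :=
  forall a b : 'I_m, (a < b)%N -> (g a < g b)%N.

(* For every mode k keep R_k linearly independent slices of X, in increasing
   order: the rows of X_(k) given by a maximal-rank row selection; call the
   resulting subtensor Y.  Passing to a subtensor only deletes rows and
   columns of each unfolding, so ranks cannot grow.  Conversely every mode-k
   slice of X is a linear combination of the kept ones, so expanding the
   off-mode coordinates of a mode-n fibre one at a time shows that each fibre,
   restricted to the kept mode-n indices, is a combination of mode-n fibres
   of Y.  Hence the column space of Y_(n) contains that of the kept rows of
   X_(n), which have rank R_n. *)

From Pilot Require Import Defs.
From HB Require Import structures.
From mathcomp Require Import all_boot all_order all_algebra.
From mathcomp Require Import reals.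
Import Order.TTheory GRing.Theory Num.Theory.
Local Open Scope ring_scope.
Set Implicit Arguments. Unset Strict Implicit. Unset Printing Implicit Defensive.

Section SortedMaxRankFun.
Variables (F : fieldType) (m n : nat) (A : 'M[F]_(m, n)).

Definition maxrank_rows : {set 'I_m} := [set maxrankfun A i | i : 'I_(\rank A)].

Lemma card_maxrank_rows : #|maxrank_rows| = \rank A.
Proof. by rewrite card_imset ?card_ord //; apply: maxrankfun_inj. Qed.

Definition sorted_maxrankfun (i : 'I_(\rank A)) : 'I_m :=
  Order.enum_val (cast_ord (esym card_maxrank_rows) i).

Lemma sorted_maxrankfun_incr : strictly_increasing sorted_maxrankfun.
Proof.
move=> a b ab.
have /leW_mono lt_enum_val := @Order.le_enum_val _ 'I_m le_total maxrank_rows.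
by have := lt_enum_val (cast_ord _ a) (cast_ord _ b); rewrite !ltEord => ->.
Qed.

Lemma eq_sorted_maxrowsub : (rowsub sorted_maxrankfun A :=: A)%MS.
Proof.
apply/eqmxP; rewrite rowsub_sub -{1}(eq_maxrowsub A).
apply/row_subP => i; rewrite row_rowsub.
have row_i : maxrankfun A i \in maxrank_rows by apply: imset_f.
have -> : maxrankfun A i =
    sorted_maxrankfun
      (cast_ord card_maxrank_rows (Order.enum_rank_in row_i (maxrankfun A i))).
  by rewrite /sorted_maxrankfun cast_ordK Order.enum_rankK_in.
by rewrite -row_rowsub row_sub.
Qed.

End SortedMaxRankFun.
Arguments sorted_maxrankfun {F m n} A i.

Section DependentUpdate.
Variables (K : finType) (T : K -> Type).
Implicit Types (x : {dffun forall k, T k}) (k l : K).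

Definition set_index x k (v : T k) : {dffun forall k, T k} := [ffun l => dfwith x v l].

Lemma set_index_eq x k (v : T k) : set_index x v k = v.
Proof. by rewrite ffunE dfwith_in. Qed.

Lemma set_index_ne x k (v : T k) l : l != k -> set_index x v l = x l.
Proof. by move=> lk; rewrite ffunE dfwith_out // eq_sym. Qed.

Lemma set_index_id x k : set_index x (x k) = x.
Proof.
by apply/ffunP => l; case: (eqVneq l k) => [->|lk]; rewrite ?set_index_eq ?set_index_ne.
Qed.

Lemma set_indexC x k l (a : T k) (b : T l) :
  k != l -> set_index (set_index x a) b = set_index (set_index x b) a.
Proof.
move=> kl; have lk : l != k by rewrite eq_sym.
apply/ffunP => j.
have [->|jk] := eqVneq j k; first by rewrite set_index_ne // !set_index_eq.
have [->|jl] := eqVneq j l; first by rewrite set_index_eq set_index_ne // set_index_eq.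
by rewrite !set_index_ne.
Qed.

End DependentUpdate.
Arguments set_index {K T} x k v.

(* [merge_val] matches on [idP (k != n)] and its branches mention that proof,
   so the match can only be reduced through these generalized forms. *)
Lemma match_idP_true (b : bool) (P : Type) (f : b -> P) (g : ~ b -> P) (hb : b) :
  match @idP b with ReflectT h => f h | ReflectF h => g h end = f hb.
Proof.
move: f g hb; destruct (@idP b) as [h|h] => f g hb; last by case: (h hb).
by rewrite (bool_irrelevance h hb).
Qed.

Lemma match_idP_false (b : bool) (P : Type) (f : b -> P) (g : ~ b -> P) (y : P) :
  ~ b -> (forall h, g h = y) ->
  match @idP b with ReflectT h => f h | ReflectF h => g h end = y.
Proof.
by move: f g; destruct (@idP b) as [h|h] => f g nb gy; [case: (nb isT) | apply: gy].
Qed.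

Section Unfolding.
Variables (N : nat) (I : 'I_N -> nat).

Lemma merge_val_ne (n : 'I_N) (i : 'I_(I n)) (c : cindex I n) (l : 'I_N) (ln : l != n) :
  merge_val i c l = c (exist _ l ln).
Proof. exact: match_idP_true. Qed.

Lemma merge_val_eq (n : 'I_N) (i : 'I_(I n)) (c : cindex I n) : merge_val i c n = i.
Proof. by apply: match_idP_false => [|nn]; [rewrite eqxx | apply: val_inj]. Qed.

Definition drop_mode (n : 'I_N) (x : mindex I) : cindex I n := [ffun l => x (sval l)].

Lemma merge_drop_mode (n : 'I_N) (v : 'I_(I n)) (x : mindex I) :
  Defs.merge v (drop_mode n x) = set_index x n v.
Proof.
apply/ffunP => l; rewrite ffunE; have [->|ln] := eqVneq l n.
  by rewrite merge_val_eq set_index_eq.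
by rewrite merge_val_ne set_index_ne // ffunE.
Qed.

Lemma drop_mode_merge (n : 'I_N) (i : 'I_(I n)) (c : cindex I n) :
  drop_mode n (Defs.merge i c) = c.
Proof. by apply/ffunP => -[l ln]; rewrite !ffunE /= (merge_val_ne _ _ ln). Qed.

Lemma merge_set_index (n : 'I_N) (i v : 'I_(I n)) (c : cindex I n) :
  Defs.merge v c = set_index (Defs.merge i c) n v.
Proof. by rewrite -merge_drop_mode drop_mode_merge. Qed.

Lemma unfolding_mindex (R : Type) (X : tensor R I) (n : 'I_N) (x : mindex I) :
  unfolding X n (x n) (enum_rank (drop_mode n x)) = X x.
Proof. by rewrite mxE enum_rankK merge_drop_mode set_index_id. Qed.

End Unfolding.

Section SubtensorRank.
Variables (F : fieldType) (N : nat) (I : 'I_N -> nat) (X : tensor F I).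

Lemma mode_expansion (k : 'I_N) (m : nat) (h : 'I_m -> 'I_(I k)) :
  (unfolding X k <= rowsub h (unfolding X k))%MS ->
  exists D : 'M[F]_(I k, m), forall x, X x = \sum_s D (x k) s * X (set_index x k (h s)).
Proof.
case/submxP => D defX; exists D => x.
have := congr1 (fun M : 'M_(_, _) => M (x k) (enum_rank (drop_mode k x))) defX.
rewrite unfolding_mindex mxE => ->.
by apply: eq_bigr => s _; rewrite !mxE enum_rankK merge_drop_mode.
Qed.

Variables (J : 'I_N -> nat) (g : forall k, 'I_(J k) -> 'I_(I k)).
Local Notation Y := (subtensor X g).

Definition map_cindex (n : 'I_N) (c : cindex J n) : cindex I n := [ffun l => g (c l)].

Lemma unfolding_subtensor (n : 'I_N) :
  unfolding Y n =
  rowsub (@g n) (colsub (fun j => enum_rank (map_cindex (enum_val j))) (unfolding X n)).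
Proof.
apply/matrixP => i j; rewrite !mxE /subtensor enum_rankK; congr X.
apply/ffunP => k; rewrite !ffunE; have [->|kn] := eqVneq k n.
  by rewrite !merge_val_eq.
by rewrite !(merge_val_ne _ _ kn) ffunE.
Qed.

Lemma mxrank_unfolding_subtensor_le (n : 'I_N) :
  (\rank (unfolding Y n) <= \rank (unfolding X n))%N.
Proof.
rewrite unfolding_subtensor; apply: leq_trans (mxrankS (rowsub_sub _ _)) _.
by rewrite -mxrank_tr trmx_mxsub -(mxrank_tr (unfolding X n)) mxrankS ?rowsub_sub.
Qed.

Hypothesis g_span : forall k, (unfolding X k <= rowsub (@g k) (unfolding X k))%MS.
Variable n : 'I_N.

Definition selected_fibre (x : mindex I) : 'rV[F]_(J n) :=
  \row_s X (set_index x n (@g n s)).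

Lemma selected_fibre_sub_codom (x : mindex I) :
  (forall l, l != n -> x l \in codom (@g l)) ->
  (selected_fibre x <= (unfolding Y n)^T)%MS.
Proof.
move=> x_codom; pose c : cindex J n := [ffun l => iinv (x_codom (sval l) (svalP l))].
suff -> : selected_fibre x = row (enum_rank c) (unfolding Y n)^T by apply: row_sub.
apply/rowP => s; rewrite !mxE enum_rankK /subtensor; congr X.
apply/ffunP => k; rewrite ![in RHS]ffunE; have [->|kn] := eqVneq k n.
  by rewrite merge_val_eq set_index_eq.
by rewrite (merge_val_ne _ _ kn) [in RHS]ffunE f_iinv set_index_ne.
Qed.

Lemma selected_fibre_sub (x : mindex I) : (selected_fibre x <= (unfolding Y n)^T)%MS.
Proof.
(* Induction on the number of off-mode coordinates of x outside the selected
   indices; mode_expansion removes one of them. *)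
pose off (y : mindex I) := [set l | (l != n) && (y l \notin codom (@g l))].
elim: {x}_.+1 {-2}x (ltnSn #|off x|) => // b IHb x; rewrite ltnS => off_x.
have [off0 | [l0]] := set_0Vmem (off x).
  apply: selected_fibre_sub_codom => l ln.
  by move/setP/(_ l): off0; rewrite !inE ln => /negbFE.
rewrite inE => /andP[l0n x_l0].
have [D expandX] := mode_expansion (g_span l0).
have -> : selected_fibre x =
    \sum_t D (x l0) t *: selected_fibre (set_index x l0 (@g l0 t)).
  apply/rowP => s; rewrite mxE summxE expandX set_index_ne //.
  by apply: eq_bigr => t _; rewrite !mxE set_indexC // eq_sym.
apply: summx_sub => t _; apply/scalemx_sub/IHb.
apply: leq_trans off_x; apply: proper_card; apply/properP; split.
  apply/subsetP => l; rewrite !inE => /andP[ln].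
  have [->|ll0] := eqVneq l l0; first by rewrite set_index_eq codom_f.
  by rewrite set_index_ne // ln.
by exists l0; rewrite !inE ?set_index_eq ?codom_f ?l0n.
Qed.

Lemma mxrank_unfolding_subtensor (i0 : 'I_(I n)) :
  \rank (unfolding Y n) = \rank (unfolding X n).
Proof.
apply/eqP; rewrite eqn_leq mxrank_unfolding_subtensor_le /=.
apply: leq_trans (mxrankS (g_span n)) _.
rewrite -mxrank_tr -(mxrank_tr (unfolding Y n)) mxrankS //.
apply/row_subP => c.
suff -> : row c (rowsub (@g n) (unfolding X n))^T =
          selected_fibre (Defs.merge i0 (enum_val c)).
  exact: selected_fibre_sub.
by apply/rowP => s; rewrite !mxE (merge_set_index i0).
Qed.

End SubtensorRank.

Unset Implicit Arguments.
Set Strict Implicit.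

Theorem proposition3p5 (R : realType) (N : nat) (I : 'I_N -> nat)
    (X : tensor R I) :
  (exists i : mindex I, X i != 0) ->
  exists f : forall k : 'I_N, 'I_(\rank (unfolding X k)) -> 'I_(I k),
    (forall k, (0 < \rank (unfolding X k))%N /\ strictly_increasing (f k)) /\
    (forall n : 'I_N,
       \rank (unfolding (subtensor X f) n) = \rank (unfolding X n)).
Proof.
case=> x0 x0_neq0.
have unfolding_neq0 k : unfolding X k != 0.
  apply: contra_neq x0_neq0 => /matrixP/(_ (x0 k) (enum_rank (drop_mode k x0))).
  by rewrite unfolding_mindex mxE.
exists (fun k => sorted_maxrankfun (unfolding X k)); split=> [k | n].
  by rewrite lt0n mxrank_eq0 unfolding_neq0; split; last exact: sorted_maxrankfun_incr.
apply: (mxrank_unfolding_subtensor _ (x0 n)) => k.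
by rewrite eq_sorted_maxrowsub.
Qed.
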